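(* Let $r\ge2$ be an integer, $m,\ell$ positive integers with $r<2^m$, let $\alpha_0$ be a real number with $\alpha_0\in(-r/2,r/2]$, and let $B$ be an integer with $1\le B<B_{\max}=(2^{m+\ell}/r-1)/2$. Then $$\sum_{t=-B}^{B}P(\alpha_0+rt)\ \ge\ \frac1r\left(1-\frac{1}{\pi^2}\left(\frac{2}{B}+\frac{1}{B^2}+\frac{1}{3B^3}\right)\right)-\frac{\pi^2(2B+1)}{2^{m+\ell}}.$$
   Context: Let $\beta=2^{m+\ell}\bmod r$ and $L=\lfloor 2^{m+\ell}/r\rfloor$. For real $\alpha$ not a multiple of $2^{m+\ell}$, $$P(\alpha)=\frac{\beta}{2^{2(m+\ell)}}\cdot\frac{1-\cos(2\pi\alpha(L+1)/2^{m+\ell})}{1-\cos(2\pi\alpha/2^{m+\ell})}+\frac{r-\beta}{2^{2(m+\ell)}}\cdot\frac{1-\cos(2\pi\alpha L/2^{m+\ell})}{1-\cos(2\pi\alpha/2^{m+\ell})},$$ and $P(0)=(L^2r+(2L+1)\beta)/2^{2(m+\ell)}$. *)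

From Stdlib Require Import Reals Lra Lia ZArith Arith Classical ClassicalDescription.
Open Scope R_scope.

Definition Qn (m l : nat) : R := 2 ^ (m + l).

Definition betan (r m l : nat) : nat := Nat.modulo (Nat.pow 2 (m + l)) r.
Definition Ln (r m l : nat) : nat := Nat.div (Nat.pow 2 (m + l)) r.

Definition multQ (m l : nat) (alpha : R) : Prop :=
  exists k : Z, alpha = IZR k * Qn m l.

(* P(alpha) from the paper; at multiples of 2^(m+l) it takes the value P(0)
   (its continuous / periodic extension). *)
Definition P (r m l : nat) (alpha : R) : R :=
  let Q := Qn m l in
  let beta := INR (betan r m l) in
  let L := INR (Ln r m l) in
  if excluded_middle_informative (multQ m l alpha) then
    (L ^ 2 * INR r + (2 * L + 1) * beta) / Q ^ 2
  else
    beta / Q ^ 2 * ((1 - cos (2 * PI * alpha * (L + 1) / Q)) / (1 - cos (2 * PI * alpha / Q)))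
    + (INR r - beta) / Q ^ 2 * ((1 - cos (2 * PI * alpha * L / Q)) / (1 - cos (2 * PI * alpha / Q))).

From Stdlib Require Import Reals Lra Lia ZArith ClassicalDescription.
Open Scope R_scope.

(* Put [x = alpha0 / r], so that the terms are [P (r (x + y))] for the integers [|y| <= B].
   [P] mixes, with weights [beta] and [r - beta], the Fejer kernels of orders [L + 1] and [L].
   Bounding [1 - cos] by its quadratic Taylor polynomial and expanding [sin^2] to second order
   about the common centre [PI alpha / r], where the first-order terms cancel, gives
   [P (r (x + y)) >= sin (PI x)^2 / (r PI^2 (x + y)^2) - 3 / 2^(m+l)].
   Summed over all integers [y], [sin (PI x)^2 / (PI^2 (x + y)^2)] gives [1]: Fejer's identity
   [sum_k sin^2 (N u_k) / sin^2 u_k = N^2] at [N] equally spaced nodes [u_k] bounds the windows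
   of width [N] below by [1 - 10 / N], and the terms with [|y| > B] add up to at most
   [2 / (PI^2 B)]. The result [(1 - 2 / (PI^2 B)) / r - 3 (2 B + 1) / 2^(m+l)] is sharper than
   the stated bound. For [x = 0] one uses [P 0 >= 1 / r] and [P >= 0] instead. *)

Lemma Rabs_le_inv a b : Rabs a <= b -> - b <= a <= b.
Proof. unfold Rabs; destruct (Rcase_abs a); lra. Qed.

Lemma PI_gt_3 : 3 < PI.
Proof. generalize PI2_3_2; lra. Qed.

Lemma sin_ge_sub_cube a : 0 <= a -> a <= PI -> a - a ^ 3 / 6 <= sin a.
Proof.
  intros Ha0 HaPI. generalize PI_4; intro HPI.
  destruct (SIN a Ha0 HaPI) as [Hlb _].
  replace (sin_lb a) with (a - a ^ 3 / 6 + a ^ 5 * (42 - a * a) / 5040) in Hlb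
    by (unfold sin_lb, sin_approx, sin_term; simpl; field).
  assert (0 <= a ^ 5 * (42 - a * a) / 5040).
  { apply Rmult_le_pos; [|lra]. apply Rmult_le_pos; [apply pow_le|]; nra. }
  lra.
Qed.

Lemma Rabs_sin_le u : Rabs (sin u) <= Rabs u.
Proof.
  assert (Hpos : forall v, 0 <= v -> Rabs (sin v) <= v).
  { intros v Hv. destruct (Req_dec v 0) as [->|Hv0]; [rewrite sin_0, Rabs_R0; lra|].
    generalize (sin_lt_x v ltac:(lra)) (SIN_bound v) PI_gt_3; intros Hlt Hb HPI.
    apply Rabs_le. split; [|lra].
    destruct (Rle_lt_dec 1 v); [lra|].
    assert (0 < sin v) by (apply sin_gt_0; lra). lra. }
  destruct (Rle_lt_dec 0 u).
  - rewrite (Rabs_right u) by lra. auto.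
  - rewrite (Rabs_left u), <- Rabs_Ropp, <- sin_neg by lra. apply Hpos; lra.
Qed.

Lemma sin_sqr_le u : sin u ^ 2 <= u ^ 2.
Proof.
  rewrite <- (pow2_abs (sin u)), <- (pow2_abs u).
  generalize (Rabs_sin_le u) (Rabs_pos (sin u)); intros. nra.
Qed.

Lemma one_sub_cos_le t : 1 - cos t <= t ^ 2 / 2.
Proof.
  replace t with (2 * (t / 2)) at 1 by field. rewrite cos_2a_sin.
  generalize (sin_sqr_le (t / 2)); simpl; nra.
Qed.

Lemma Rabs_sin_sub_le y : Rabs y <= PI -> Rabs (sin y - y) <= y ^ 2.
Proof.
  assert (Hpos : forall v, 0 <= v <= PI -> Rabs (sin v - v) <= v ^ 2).
  { intros v Hv. generalize (sin_ge_sub_cube v ltac:(lra) ltac:(lra)) PI_4; intros Hlb HPI.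
    generalize (Rabs_sin_le v); rewrite (Rabs_right v) by lra; intros Hub.
    generalize (Rle_abs (sin v)); intro. apply Rabs_le. simpl in *. nra. }
  intros Hy. destruct (Rle_lt_dec 0 y).
  - rewrite Rabs_right in Hy by lra. apply Hpos; lra.
  - rewrite Rabs_left in Hy by lra.
    replace (sin y - y) with (- (sin (- y) - - y)) by (rewrite sin_neg; ring).
    rewrite Rabs_Ropp. replace (y ^ 2) with ((- y) ^ 2) by ring. apply Hpos; lra.
Qed.

Lemma sin_sqr_shift_ge c d :
  Rabs d <= PI / 2 -> sin (c + d) ^ 2 >= sin c ^ 2 + sin (2 * c) * d - 3 * d ^ 2.
Proof.
  intros Hd.
  assert (Hexp : sin (c + d) ^ 2 - sin c ^ 2
                 = sin (2 * c) * (sin d * cos d) + cos (2 * c) * sin d ^ 2).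
  { rewrite sin_plus, sin_2a, cos_2a.
    generalize (sin2_cos2 d) (sin2_cos2 c); unfold Rsqr; intros. nra. }
  assert (H2d : Rabs (2 * sin d * cos d - 2 * d) <= (2 * d) ^ 2).
  { rewrite <- sin_2a. apply Rabs_sin_sub_le.
    rewrite Rabs_mult, Rabs_right by lra. lra. }
  apply Rabs_le_inv in H2d.
  generalize (SIN_bound (2 * c)) (COS_bound (2 * c)) (sin_sqr_le d) (pow2_ge_0 (sin d)).
  intros. nra.
Qed.

Lemma sin_sqr_Rabs u : sin u ^ 2 = sin (Rabs u) ^ 2.
Proof.
  destruct (Rle_lt_dec 0 u).
  - rewrite Rabs_right by lra. reflexivity.
  - rewrite Rabs_left, sin_neg by lra. ring.
Qed.

Lemma sin_sqr_pos u : 0 < Rabs u -> Rabs u <= PI / 2 -> 0 < sin u ^ 2.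
Proof.
  intros. rewrite sin_sqr_Rabs. generalize PI_RGT_0; intro.
  assert (0 < sin (Rabs u)) by (apply sin_gt_0; lra). nra.
Qed.

(* From [sin a >= a - a^3/6] and [(1 - s/6)^2 (1 + 10 s) >= 1] for [s = a^2 <= 4]. *)
Lemma inv_sin_sqr_le u : 0 < Rabs u -> Rabs u <= PI / 2 -> 1 / sin u ^ 2 <= 1 / u ^ 2 + 10.
Proof.
  intros Hu0 Hu. generalize PI_4 (sin_sqr_pos u Hu0 Hu); intros HPI Hs.
  rewrite sin_sqr_Rabs in *. rewrite <- (pow2_abs u).
  set (a := Rabs u) in *. clearbody a.
  generalize (sin_ge_sub_cube a ltac:(lra) ltac:(lra)); intro Hlb.
  assert (0 <= a - a ^ 3 / 6) by (simpl; nra).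
  assert (Hlb2 : a ^ 2 * (1 - a ^ 2 / 6) ^ 2 <= sin a ^ 2)
    by (replace (a ^ 2 * (1 - a ^ 2 / 6) ^ 2) with ((a - a ^ 3 / 6) ^ 2) by field; simpl; nra).
  assert (0 < a ^ 2 <= 4) by (simpl; nra).
  assert (Hpoly : (1 - a ^ 2 / 6) ^ 2 * (1 + 10 * a ^ 2) >= 1) by nra.
  replace (1 / a ^ 2 + 10) with ((1 + 10 * a ^ 2) / a ^ 2) by (field; lra).
  apply Rmult_le_reg_r with (sin a ^ 2 * a ^ 2); [nra|].
  assert (a ^ 2 * ((1 - a ^ 2 / 6) ^ 2 * (1 + 10 * a ^ 2)) <= sin a ^ 2 * (1 + 10 * a ^ 2)).
  { replace (a ^ 2 * ((1 - a ^ 2 / 6) ^ 2 * (1 + 10 * a ^ 2)))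
      with (a ^ 2 * (1 - a ^ 2 / 6) ^ 2 * (1 + 10 * a ^ 2)) by ring.
    apply Rmult_le_compat_r; lra. }
  field_simplify; [nra | intros ->; lra | intros Hz; rewrite Hz in Hs; lra].
Qed.

Lemma sin_neq_0_small u : 0 < Rabs u -> Rabs u <= PI / 2 -> sin u <> 0.
Proof. intros Hu0 Hu Hz. generalize (sin_sqr_pos u Hu0 Hu). rewrite Hz. simpl. lra. Qed.

Lemma sum_f_R0_telescope (F : nat -> R) n :
  sum_f_R0 (fun k => F (S k) - F k) n = F (S n) - F O.
Proof. induction n as [|n IHn]; simpl; [ring | rewrite IHn; ring]. Qed.

Lemma sum_f_R0_swap (u : nat -> nat -> R) m n :
  sum_f_R0 (fun i => sum_f_R0 (u i) n) m = sum_f_R0 (fun j => sum_f_R0 (fun i => u i j) m) n.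
Proof.
  induction n as [|n IHn]; simpl; [reflexivity|].
  rewrite plus_sum, IHn. reflexivity.
Qed.

Definition csum (g : R -> R) (M : nat) : R :=
  sum_f_R0 (fun k => g (INR k - INR M)) (2 * M).

Lemma csum_O g : csum g 0 = g 0.
Proof. unfold csum; simpl. f_equal; ring. Qed.

Lemma csum_S g M : csum g (S M) = csum g M + g (INR (S M)) + g (- INR (S M)).
Proof.
  unfold csum. replace (2 * S M)%nat with (S (S (2 * M))) by lia.
  rewrite tech5, decomp_sum by lia. cbn [Nat.pred].
  rewrite (sum_eq _ (fun k => g (INR k - INR M))).
  - replace (INR 0 - INR (S M)) with (- INR (S M)) by (simpl; ring).
    replace (INR (S (S (2 * M))) - INR (S M)) with (INR (S M))
      by (rewrite !S_INR, mult_INR; simpl; ring).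
    ring.
  - intros k _. rewrite !S_INR. f_equal. ring.
Qed.

Lemma csum_affine g a c M : csum (fun y => a * g y + c) M = a * csum g M + (2 * INR M + 1) * c.
Proof.
  unfold csum. rewrite plus_sum, sum_cte, scal_sum.
  replace (INR (S (2 * M))) with (2 * INR M + 1) by (rewrite S_INR, mult_INR; simpl; ring).
  f_equal; [apply sum_eq; intros; ring | ring].
Qed.

Lemma INR_sub_INR k M : INR k - INR M = IZR (Z.of_nat k - Z.of_nat M).
Proof. rewrite minus_IZR, <- !INR_IZR_INZ. reflexivity. Qed.

Lemma Rabs_INR_sub_le k M : (k <= 2 * M)%nat -> Rabs (INR k - INR M) <= INR M.
Proof.
  intros Hk. apply le_INR in Hk. rewrite mult_INR in Hk. simpl in Hk.
  generalize (pos_INR k); intro. apply Rabs_le. lra.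
Qed.

Lemma csum_le g h M :
  (forall z : Z, Rabs (IZR z) <= INR M -> g (IZR z) <= h (IZR z)) -> csum g M <= csum h M.
Proof.
  intros Hgh. apply sum_Rle. intros k Hk.
  rewrite INR_sub_INR. apply Hgh. rewrite <- INR_sub_INR. apply Rabs_INR_sub_le, Hk.
Qed.

Lemma sum_cos_arith_eq0 (n j : nat) (A : R) : (1 <= j <= n)%nat ->
  sum_f_R0 (fun k => cos (A + INR k * (2 * PI * INR j / INR (S n)))) n = 0.
Proof.
  intros Hj. set (N := INR (S n)). set (b := 2 * PI * INR j / N).
  assert (HN : 0 < N) by (apply lt_0_INR; lia).
  assert (HjN : 1 <= INR j < N) by (split; [apply (le_INR 1) | apply lt_INR]; lia).
  assert (Hs : 0 < sin (b / 2)).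
  { generalize PI_RGT_0; intro. apply sin_gt_0; unfold b.
    - apply Rdiv_lt_0_compat; [|lra]. apply Rdiv_lt_0_compat; nra.
    - replace (2 * PI * INR j / N / 2) with (PI * (INR j / N)) by (field; lra).
      assert (INR j / N < 1) by (apply (Rmult_lt_reg_r N); [lra|]; field_simplify; lra).
      nra. }
  (* [2 sin(b/2) cos(A + k b)] telescopes, and the total phase advance [N b] is [2 pi j]. *)
  set (F := fun k => sin (A + INR k * b - b / 2)).
  assert (Htel : 2 * sin (b / 2) * sum_f_R0 (fun k => cos (A + INR k * b)) n = F (S n) - F O).
  { rewrite <- sum_f_R0_telescope, scal_sum. apply sum_eq. intros k _.
    unfold F. rewrite S_INR.
    replace (A + (INR k + 1) * b - b / 2) with (A + INR k * b + b / 2) by lra.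
    rewrite sin_plus, sin_minus. ring. }
  assert (Hper : F (S n) = F O).
  { unfold F. fold N. replace (A + N * b - b / 2) with (A + INR 0 * b - b / 2 + 2 * INR j * PI)
      by (unfold b; simpl; field; lra).
    apply sin_period. }
  apply Rmult_eq_reg_l with (2 * sin (b / 2)); [|lra]. rewrite Htel, Hper. ring.
Qed.

Definition dirichlet (phi : R) (n : nat) : R := csum (fun y => cos (2 * y * phi)) n.

Lemma sin_mul_dirichlet phi n : sin phi * dirichlet phi n = sin ((2 * INR n + 1) * phi).
Proof.
  unfold dirichlet. induction n as [|n IHn].
  - rewrite csum_O. simpl. replace ((2 * 0 + 1) * phi) with phi by ring.
    replace (2 * 0 * phi) with 0 by ring. rewrite cos_0. ring.
  - rewrite csum_S, !Rmult_plus_distr_l, IHn.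
    replace (2 * - INR (S n) * phi) with (- (2 * INR (S n) * phi)) by ring.
    rewrite cos_neg, S_INR.
    replace ((2 * (INR n + 1) + 1) * phi) with ((2 * INR n + 1) * phi + 2 * phi) by ring.
    replace (2 * (INR n + 1) * phi) with ((2 * INR n + 1) * phi + phi) by ring.
    rewrite sin_plus, cos_plus, sin_2a, cos_2a_sin. ring.
Qed.

Lemma sin_sqr_fejer phi n : sin (INR (S n) * phi) ^ 2 = sin phi ^ 2 * sum_f_R0 (dirichlet phi) n.
Proof.
  set (G := fun i => cos (2 * INR i * phi)).
  rewrite scal_sum, (sum_eq _ (fun i => (G (S i) - G i) * (- 1 / 2))).
  - rewrite <- (scal_sum (fun i => G (S i) - G i)), sum_f_R0_telescope.
    unfold G. replace (2 * INR (S n) * phi) with (2 * (INR (S n) * phi)) by ring.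
    rewrite cos_2a_sin. simpl. replace (2 * 0 * phi) with 0 by ring. rewrite cos_0. field.
  - intros i _. unfold G.
    replace (dirichlet phi i * sin phi ^ 2) with (sin phi * (sin phi * dirichlet phi i)) by ring.
    rewrite sin_mul_dirichlet, S_INR.
    replace (2 * INR i * phi) with ((2 * INR i + 1) * phi - phi) by ring.
    replace (2 * (INR i + 1) * phi) with ((2 * INR i + 1) * phi + phi) by ring.
    rewrite cos_plus, cos_minus. field.
Qed.

Lemma fejer_sum_eq (n : nat) (a : R) :
  (forall k, (k <= n)%nat -> sin (a + INR k * (PI / INR (S n))) <> 0) ->
  sum_f_R0 (fun k => sin (INR (S n) * (a + INR k * (PI / INR (S n)))) ^ 2
                     / sin (a + INR k * (PI / INR (S n))) ^ 2) n = INR (S n) ^ 2.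
Proof.
  intros Hs.
  rewrite (sum_eq _ (fun k => sum_f_R0 (dirichlet (a + INR k * (PI / INR (S n)))) n))
    by (intros k Hk; rewrite sin_sqr_fejer; field; apply Hs, Hk).
  rewrite sum_f_R0_swap. unfold dirichlet.
  set (N := INR (S n)). assert (HN : 0 < N) by (apply lt_0_INR; lia).
  set (C := fun y => sum_f_R0 (fun k => cos (2 * y * (a + INR k * (PI / N)))) n).
  assert (HC0 : forall i, (1 <= i <= n)%nat -> C (INR i) = 0).
  { intros i Hi. rewrite <- (sum_cos_arith_eq0 n i (2 * INR i * a) Hi).
    apply sum_eq. intros k _. f_equal. fold N. field. lra. }
  assert (HCsum : forall i, (i <= n)%nat -> csum C i = N).
  { induction i as [|i IHi]; intros Hi.
    - rewrite csum_O. unfold C. rewrite (sum_eq _ (fun _ => 1)), sum_cte; [unfold N; ring|].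
      intros. replace (2 * 0 * _) with 0 by ring. apply cos_0.
    - rewrite csum_S, IHi, HC0 by lia.
      replace (C (- INR (S i))) with (C (INR (S i))).
      + rewrite HC0 by lia. ring.
      + unfold C. apply sum_eq. intros k _. rewrite <- cos_neg. f_equal. ring. }
  rewrite (sum_eq _ (fun _ => N)), sum_cte; [unfold N; ring|].
  intros i Hi. transitivity (csum C i); [|exact (HCsum i Hi)]. unfold csum, C.
  exact (sum_f_R0_swap (fun k j => cos (2 * (INR j - INR i) * (a + INR k * (PI / N)))) n (2 * i)).
Qed.

Lemma sin_sqr_add_IZR_PI u z : sin (u + IZR z * PI) ^ 2 = sin u ^ 2.
Proof.
  rewrite sin_plus, (sin_eq_0_1 (IZR z * PI)) by (exists z; reflexivity).
  generalize (sin2_cos2 (IZR z * PI)).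
  rewrite (sin_eq_0_1 (IZR z * PI)) by (exists z; reflexivity).
  unfold Rsqr. intro. nra.
Qed.

Lemma Rabs_add_IZR_pos x z : -1/2 < x <= 1/2 -> x <> 0 -> 0 < Rabs (x + IZR z).
Proof.
  intros Hx Hx0. apply Rabs_pos_lt. intros Hz.
  assert (z = 0%Z).
  { apply Z.le_antisymm; [apply Z.lt_succ_r | apply Z.lt_pred_le];
      apply lt_IZR; rewrite ?succ_IZR, ?pred_IZR; simpl; lra. }
  subst z. simpl in Hz. lra.
Qed.

(* At an integer [y], [sinc2 x y = sin (PI (x + y)) ^ 2 / (PI (x + y)) ^ 2]; its sum over all
   integers [y] is [1]. *)
Definition sinc2 (x y : R) : R := sin (PI * x) ^ 2 / (PI ^ 2 * (x + y) ^ 2).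

(* Fejer's identity at the nodes [PI (x + y) / N], [|y| <= M], combined with
   [1 / sin u ^ 2 <= 1 / u ^ 2 + 10]. *)
Lemma csum_sinc2_ge_fejer x M : -1/2 < x <= 1/2 -> x <> 0 ->
  csum (sinc2 x) M >= 1 - 10 / INR (S (2 * M)).
Proof.
  intros Hx Hx0. set (N := INR (S (2 * M))).
  assert (HN : N = 2 * INR M + 1) by (unfold N; rewrite S_INR, mult_INR; simpl; ring).
  assert (HN0 : 0 < N) by (generalize (pos_INR M); lra).
  generalize PI_RGT_0; intro HPI.
  set (h := fun y => sin (PI * x) ^ 2 / sin (PI * (x + y) / N) ^ 2).
  assert (Hnode : forall z, Rabs (IZR z) <= INR M ->
            0 < Rabs (PI * (x + IZR z) / N) <= PI / 2).
  { intros z Hz. generalize (Rabs_add_IZR_pos x z Hx Hx0); intro Hpos.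
    assert (Rabs (x + IZR z) <= INR M + 1 / 2)
      by (generalize (Rabs_triang x (IZR z)); unfold Rabs at 2; destruct Rcase_abs; lra).
    replace (PI * (x + IZR z) / N) with (PI / N * (x + IZR z)) by (field; lra).
    rewrite Rabs_mult, (Rabs_right (PI / N)) by (apply Rle_ge, Rlt_le, Rdiv_lt_0_compat; lra).
    assert (0 < PI / N) by (apply Rdiv_lt_0_compat; lra).
    split; [nra|].
    apply Rle_trans with (PI / N * (N / 2)); [nra | right; field; lra]. }
  assert (Hfejer : csum h M = N ^ 2).
  { unfold N. rewrite <- (fejer_sum_eq (2 * M) (PI * (x - INR M) / INR (S (2 * M)))). fold N.
    - apply sum_eq. intros k Hk. unfold h. fold N.
      replace (PI * (x - INR M) / N + INR k * (PI / N)) with (PI * (x + (INR k - INR M)) / N)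
        by (field; lra).
      replace (N * (PI * (x + (INR k - INR M)) / N))
        with (PI * x + IZR (Z.of_nat k - Z.of_nat M) * PI)
        by (rewrite <- INR_sub_INR; field; lra).
      rewrite sin_sqr_add_IZR_PI. reflexivity.
    - intros k Hk. fold N.
      replace (PI * (x - INR M) / N + INR k * (PI / N))
        with (PI * (x + IZR (Z.of_nat k - Z.of_nat M)) / N)
        by (rewrite <- INR_sub_INR; field; lra).
      destruct (Hnode (Z.of_nat k - Z.of_nat M)%Z) as [Hu0 Hu].
      + rewrite <- INR_sub_INR. apply Rabs_INR_sub_le, Hk.
      + apply sin_neq_0_small; assumption. }
  assert (Hle : csum h M <= csum (fun y => N ^ 2 * sinc2 x y + 10) M).
  { apply csum_le. intros z Hz. destruct (Hnode z Hz) as [Hu0 Hu].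
    generalize (inv_sin_sqr_le _ Hu0 Hu) (SIN_bound (PI * x)); intros Hinv Hsin.
    unfold h, sinc2. set (u := PI * (x + IZR z) / N) in *.
    assert (0 <= sin (PI * x) ^ 2 <= 1) by (simpl; nra).
    replace (N ^ 2 * (sin (PI * x) ^ 2 / (PI ^ 2 * (x + IZR z) ^ 2)))
      with (sin (PI * x) ^ 2 * (1 / u ^ 2)).
    2: { unfold u. field. split; [|lra].
         generalize (Rabs_add_IZR_pos x z Hx Hx0); intros Hp Hz0.
         rewrite Hz0, Rabs_R0 in Hp. lra. }
    unfold Rdiv at 1. rewrite <- (Rmult_1_l (/ sin u ^ 2)). nra. }
  rewrite csum_affine, Hfejer, <- HN in Hle.
  apply Rle_ge, (Rmult_le_reg_r (N ^ 2)); [nra|].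
  replace ((1 - 10 / N) * N ^ 2) with (N ^ 2 - 10 * N) by (field; lra). lra.
Qed.

Lemma sinc2_le_tail x y n : -1/2 < x <= 1/2 -> (1 <= n)%nat -> Rabs y = INR (S n) ->
  sinc2 x y <= 1 / PI ^ 2 * (1 / INR n - 1 / INR (S n)).
Proof.
  intros Hx Hn Hy. rewrite S_INR in *.
  assert (1 <= INR n) by (apply (le_INR 1); exact Hn).
  assert (Hsq : INR n * (INR n + 1) <= (x + y) ^ 2).
  { rewrite <- pow2_abs.
    assert (INR n + 1 / 2 <= Rabs (x + y))
      by (generalize (Rabs_triang_inv y (- x)); rewrite Rabs_Ropp;
          unfold Rabs at 2; destruct Rcase_abs; replace (y - - x) with (x + y) by ring; lra).
    nra. }
  generalize PI_RGT_0 (SIN_bound (PI * x)); intros HPI Hsin.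
  assert (0 <= sin (PI * x) ^ 2 <= 1) by (simpl; nra).
  replace (1 / PI ^ 2 * (1 / INR n - 1 / (INR n + 1))) with (1 / (PI ^ 2 * (INR n * (INR n + 1))))
    by (field; lra).
  unfold sinc2. apply Rle_trans with (1 / (PI ^ 2 * (x + y) ^ 2)).
  - unfold Rdiv. apply Rmult_le_compat_r; [|lra].
    apply Rlt_le, Rinv_0_lt_compat. apply Rmult_lt_0_compat; nra.
  - unfold Rdiv. apply Rmult_le_compat_l; [lra|]. apply Rinv_le_contravar; nra.
Qed.

Lemma csum_sinc2_tail x B d : (1 <= B)%nat -> -1/2 < x <= 1/2 ->
  csum (sinc2 x) (B + d) <= csum (sinc2 x) B + 2 / PI ^ 2 * (1 / INR B - 1 / INR (B + d)).
Proof.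
  intros HB Hx. induction d as [|d IHd].
  - rewrite Nat.add_0_r. lra.
  - rewrite <- plus_n_Sm, csum_S.
    assert (Hp : Rabs (INR (S (B + d))) = INR (S (B + d))) by (apply Rabs_right, Rle_ge, pos_INR).
    generalize (sinc2_le_tail x _ (B + d) Hx ltac:(lia) Hp).
    rewrite <- Rabs_Ropp in Hp.
    generalize (sinc2_le_tail x _ (B + d) Hx ltac:(lia) Hp).
    lra.
Qed.

Lemma Rge_of_forall_ge_sub_inv a c K : 0 <= K -> (forall n : nat, a >= c - K / INR (S n)) -> a >= c.
Proof.
  intros HK Hall. apply Rnot_lt_ge. intros Hac.
  destruct (archimed (K / (c - a))) as [Hup _].
  set (n := Z.to_nat (up (K / (c - a)))).
  assert (0 <= K / (c - a)) by (apply Rmult_le_pos; [lra | apply Rlt_le, Rinv_0_lt_compat; lra]).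
  assert (Hn : K / (c - a) < INR (S n)).
  { rewrite S_INR. unfold n. rewrite INR_IZR_INZ, Z2Nat.id; [lra|].
    apply le_IZR. lra. }
  specialize (Hall n).
  assert (K / INR (S n) < c - a).
  { apply (Rmult_lt_reg_r (INR (S n))); [lra|].
    unfold Rdiv at 1. rewrite Rmult_assoc, Rinv_l, Rmult_1_r by lra.
    apply (Rmult_lt_reg_r (/ (c - a))); [apply Rinv_0_lt_compat; lra|].
    replace ((c - a) * INR (S n) * / (c - a)) with (INR (S n)) by (field; lra). exact Hn. }
  lra.
Qed.

(* Compare with the windows [B + n] through the tail bound, and let [n] grow. *)
Lemma csum_sinc2_ge x B : (1 <= B)%nat -> -1/2 < x <= 1/2 -> x <> 0 ->
  csum (sinc2 x) B >= 1 - 2 / (PI ^ 2 * INR B).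
Proof.
  intros HB Hx Hx0.
  assert (HBpos : 1 <= INR B) by (apply (le_INR 1); exact HB).
  generalize PI_RGT_0; intro HPI. assert (0 < PI ^ 2) by (simpl; nra).
  apply (Rge_of_forall_ge_sub_inv _ _ 10); [lra|]. intros n.
  generalize (csum_sinc2_ge_fejer x (B + n) Hx Hx0) (csum_sinc2_tail x B n HB Hx).
  intros Hwin Htail.
  assert (0 < INR (B + n)) by (apply lt_0_INR; lia).
  assert (Hdrop : 0 <= 2 / PI ^ 2 * (1 / INR (B + n))).
  { apply Rmult_le_pos; apply Rlt_le, Rdiv_lt_0_compat; lra. }
  assert (Hwid : 10 / INR (S (2 * (B + n))) <= 10 / INR (S n)).
  { unfold Rdiv. apply Rmult_le_compat_l; [lra|].
    apply Rinv_le_contravar; [apply lt_0_INR; lia | apply le_INR; lia]. }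
  replace (2 / (PI ^ 2 * INR B)) with (2 / PI ^ 2 * (1 / INR B)) by (field; lra).
  lra.
Qed.

Lemma one_sub_cos_ratio_ge th a : 0 < 1 - cos th ->
  (1 - cos (2 * a)) / (1 - cos th) >= 4 * sin a ^ 2 / th ^ 2.
Proof.
  intros Hth. generalize (one_sub_cos_le th) (pow2_ge_0 (sin a)); intros Hle Hs.
  assert (0 < th ^ 2) by lra.
  assert (th <> 0) by (intros Hz; rewrite Hz, cos_0 in Hth; lra).
  rewrite cos_2a_sin.
  replace (4 * sin a ^ 2 / th ^ 2) with (2 * sin a ^ 2 / (th ^ 2 / 2)) by (field; lra).
  unfold Rdiv. apply Rle_ge, Rmult_le_compat; [nra | apply Rlt_le, Rinv_0_lt_compat; lra | nra |].
  apply Rinv_le_contravar; lra.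
Qed.

Lemma weighted_sin_sqr_ge b r c d1 d0 : 0 <= b <= r ->
  Rabs d1 <= PI / 2 -> Rabs d0 <= PI / 2 -> b * d1 + (r - b) * d0 = 0 ->
  b * sin (c + d1) ^ 2 + (r - b) * sin (c + d0) ^ 2
    >= r * sin c ^ 2 - 3 * (b * d1 ^ 2 + (r - b) * d0 ^ 2).
Proof.
  intros Hb Hd1 Hd0 Hmean.
  generalize (sin_sqr_shift_ge c d1 Hd1) (sin_sqr_shift_ge c d0 Hd0); intros H1 H0.
  apply Rle_ge.
  apply Rle_trans with (b * (sin c ^ 2 + sin (2 * c) * d1 - 3 * d1 ^ 2)
                        + (r - b) * (sin c ^ 2 + sin (2 * c) * d0 - 3 * d0 ^ 2)).
  - right. replace (r * sin c ^ 2) with (r * sin c ^ 2 + sin (2 * c) * (b * d1 + (r - b) * d0))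
      by (rewrite Hmean; ring). ring.
  - apply Rplus_le_compat; apply Rmult_le_compat_l; lra.
Qed.

Lemma fejer_term_ge Q al w a : 0 < Q -> 0 < Rabs al -> Rabs al < Q / 2 -> 0 <= w ->
  w / Q ^ 2 * ((1 - cos (2 * a)) / (1 - cos (2 * PI * al / Q)))
  >= w * (sin a ^ 2 / (PI ^ 2 * al ^ 2)).
Proof.
  intros HQ Hal0 HalQ Hw. generalize PI_RGT_0; intro HPI.
  assert (Hal : al <> 0) by (intros Hz; rewrite Hz, Rabs_R0 in Hal0; lra).
  set (e := PI / Q * al).
  assert (He : 0 < Rabs e < PI / 2).
  { assert (0 < PI / Q) by (apply Rdiv_lt_0_compat; lra).
    unfold e. rewrite Rabs_mult, (Rabs_right (PI / Q)) by lra. split; [nra|].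
    apply Rlt_le_trans with (PI / Q * (Q / 2)); [nra | right; field; lra]. }
  assert (HD : 0 < 1 - cos (2 * PI * al / Q)).
  { replace (2 * PI * al / Q) with (2 * e) by (unfold e; field; lra).
    rewrite cos_2a_sin. generalize (sin_sqr_pos e ltac:(lra) ltac:(lra)). simpl. lra. }
  generalize (one_sub_cos_ratio_ge _ a HD).
  replace (4 * sin a ^ 2 / (2 * PI * al / Q) ^ 2) with (Q ^ 2 * (sin a ^ 2 / (PI ^ 2 * al ^ 2)))
    by (field; lra).
  intros Hratio.
  replace (w * (sin a ^ 2 / (PI ^ 2 * al ^ 2)))
    with (w / Q ^ 2 * (Q ^ 2 * (sin a ^ 2 / (PI ^ 2 * al ^ 2)))) by (field; lra).
  apply Rle_ge, Rmult_le_compat_l; [|lra].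
  apply Rmult_le_pos; [lra | apply Rlt_le, Rinv_0_lt_compat, pow_lt; lra].
Qed.

(* With [Q = L r + b], the frequencies [L + 1] and [L] of the two kernels are the frequency
   [Q / r] shifted by [d1] and [d0], whose [b]-weighted mean is zero. *)
Lemma fejer_mixture_ge Q L b r al : 0 < r -> 0 <= b <= r -> r <= Q -> Q = L * r + b ->
  0 < Rabs al -> Rabs al < Q / 2 ->
  b / Q ^ 2 * ((1 - cos (2 * PI * al * (L + 1) / Q)) / (1 - cos (2 * PI * al / Q)))
  + (r - b) / Q ^ 2 * ((1 - cos (2 * PI * al * L / Q)) / (1 - cos (2 * PI * al / Q)))
  >= r * sin (PI * al / r) ^ 2 / (PI ^ 2 * al ^ 2) - 3 / Q.
Proof.
  intros Hr Hb HrQ HQ Hal0 HalQ.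
  assert (HQ0 : 0 < Q) by lra. generalize PI_RGT_0; intro HPI.
  assert (Hal : al <> 0) by (intros Hz; rewrite Hz, Rabs_R0 in Hal0; lra).
  set (A := PI ^ 2 * al ^ 2).
  assert (HA : 0 < A)
    by (unfold A; rewrite <- (pow2_abs al); apply Rmult_lt_0_compat; apply pow_lt; lra).
  set (e := PI / Q * al). set (c := PI * al / r).
  set (d1 := e * ((r - b) / r)). set (d0 := - (e * (b / r))).
  assert (He : Rabs e <= PI / 2).
  { unfold e.
    rewrite Rabs_mult, (Rabs_right (PI / Q)) by (apply Rle_ge, Rlt_le, Rdiv_lt_0_compat; lra).
    apply Rle_trans with (PI / Q * (Q / 2)); [|right; field; lra].
    apply Rmult_le_compat_l; [apply Rlt_le, Rdiv_lt_0_compat|]; lra. }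
  assert (Hfrac : 0 <= b / r <= 1 /\ 0 <= (r - b) / r <= 1).
  { split; split; unfold Rdiv;
      try (apply Rmult_le_pos; [lra | apply Rlt_le, Rinv_0_lt_compat; lra]);
      apply (Rmult_le_reg_r r); try lra; rewrite Rmult_assoc, Rinv_l; lra. }
  assert (Hd1 : Rabs d1 <= PI / 2).
  { unfold d1. rewrite Rabs_mult, (Rabs_right ((r - b) / r)) by lra.
    generalize (Rabs_pos e); nra. }
  assert (Hd0 : Rabs d0 <= PI / 2).
  { unfold d0. rewrite Rabs_Ropp, Rabs_mult, (Rabs_right (b / r)) by lra.
    generalize (Rabs_pos e); nra. }
  assert (Hmean : b * d1 + (r - b) * d0 = 0) by (unfold d1, d0; field; lra).
  assert (Hspread : (b * d1 ^ 2 + (r - b) * d0 ^ 2) / A <= 1 / Q).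
  { replace ((b * d1 ^ 2 + (r - b) * d0 ^ 2) / A) with (b * (r - b) / (r * Q ^ 2))
      by (unfold d1, d0, e, A; field; lra).
    apply (Rmult_le_reg_r (r * Q ^ 2)); [apply Rmult_lt_0_compat; [|apply pow_lt]; lra|].
    unfold Rdiv.
    rewrite Rmult_assoc, Rinv_l by (apply Rgt_not_eq, Rmult_lt_0_compat; [|apply pow_lt]; lra).
    replace (1 * / Q * (r * Q ^ 2)) with (r * Q) by (field; lra). nra. }
  replace (2 * PI * al * (L + 1) / Q) with (2 * (c + d1))
    by (unfold c, d1, e; rewrite HQ; field; lra).
  replace (2 * PI * al * L / Q) with (2 * (c + d0))
    by (unfold c, d0, e; rewrite HQ; field; lra).
  generalize (fejer_term_ge Q al b (c + d1) HQ0 Hal0 HalQ ltac:(lra))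
    (fejer_term_ge Q al (r - b) (c + d0) HQ0 Hal0 HalQ ltac:(lra))
    (weighted_sin_sqr_ge b r c d1 d0 Hb Hd1 Hd0 Hmean); fold A; intros H1 H0 Hw.
  assert (Hcomb : b * (sin (c + d1) ^ 2 / A) + (r - b) * (sin (c + d0) ^ 2 / A)
                  >= r * sin c ^ 2 / A - 3 * ((b * d1 ^ 2 + (r - b) * d0 ^ 2) / A)).
  { replace (b * (sin (c + d1) ^ 2 / A) + (r - b) * (sin (c + d0) ^ 2 / A))
      with ((b * sin (c + d1) ^ 2 + (r - b) * sin (c + d0) ^ 2) * / A) by (field; lra).
    replace (r * sin c ^ 2 / A - 3 * ((b * d1 ^ 2 + (r - b) * d0 ^ 2) / A))
      with ((r * sin c ^ 2 - 3 * (b * d1 ^ 2 + (r - b) * d0 ^ 2)) * / A) by (field; lra).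
    apply Rle_ge, Rmult_le_compat_r; [apply Rlt_le, Rinv_0_lt_compat|]; lra. }
  lra.
Qed.

Lemma Qn_pos m l : 0 < Qn m l.
Proof. apply pow_lt. lra. Qed.

Lemma Qn_div_mod r m l : Qn m l = INR (Ln r m l) * INR r + INR (betan r m l).
Proof.
  unfold Qn, Ln, betan. rewrite <- mult_INR, <- plus_INR, Nat.mul_comm, <- Nat.div_mod_eq.
  rewrite pow_INR. reflexivity.
Qed.

Lemma betan_lt r m l : (1 <= r)%nat -> INR (betan r m l) < INR r.
Proof. intros Hr. apply lt_INR, Nat.mod_upper_bound. lia. Qed.

Lemma multQ_small m l al : Rabs al < Qn m l -> multQ m l al -> al = 0.
Proof.
  intros Hal [k ->]. generalize (Qn_pos m l); intros HQ.
  rewrite Rabs_mult, (Rabs_right (Qn m l)) in Hal by lra.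
  assert (Hk : Rabs (IZR k) < 1) by (apply (Rmult_lt_reg_r (Qn m l)); lra).
  rewrite <- abs_IZR in Hk. apply lt_IZR in Hk.
  replace k with 0%Z by lia. ring.
Qed.

Lemma P_nonneg r m l al : (1 <= r)%nat -> 0 <= P r m l al.
Proof.
  intros Hr. generalize (Qn_pos m l) (betan_lt r m l Hr) (pos_INR (betan r m l))
    (pos_INR (Ln r m l)) (pos_INR r); intros HQ Hb Hb0 HL Hr0.
  assert (HQ2 : 0 < / Qn m l ^ 2) by (apply Rinv_0_lt_compat, pow_lt; lra).
  assert (Hratio : forall t u, 0 <= (1 - cos t) / (1 - cos u)).
  { intros t u. destruct (Req_dec (1 - cos u) 0) as [Hz|Hz].
    - rewrite Hz. unfold Rdiv. rewrite Rinv_0. lra.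
    - generalize (COS_bound t) (COS_bound u); intros.
      apply Rmult_le_pos, Rlt_le, Rinv_0_lt_compat; lra. }
  unfold P. destruct excluded_middle_informative; unfold Rdiv.
  - apply Rmult_le_pos; [nra | lra].
  - apply Rplus_le_le_0_compat; apply Rmult_le_pos; try apply Hratio; apply Rmult_le_pos; lra.
Qed.

Lemma P_zero_ge r m l : (1 <= r)%nat -> P r m l 0 >= 1 / INR r.
Proof.
  intros Hr. unfold P. destruct excluded_middle_informative as [_|Hnot].
  2: { exfalso. apply Hnot. exists 0%Z. ring. }
  generalize (Qn_pos m l) (Qn_div_mod r m l) (betan_lt r m l Hr) (pos_INR (betan r m l))
    (pos_INR (Ln r m l)); intros HQ HQdm Hb Hb0 HL.
  assert (Hr0 : 0 < INR r) by (apply (lt_INR 0); lia).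
  set (Q := Qn m l) in *. set (b := INR (betan r m l)) in *. set (L := INR (Ln r m l)) in *.
  (* [r (L^2 r + (2L+1) b) - (L r + b)^2 = b (r - b) >= 0] *)
  assert (0 < Q ^ 2) by (apply pow_lt; lra).
  apply Rle_ge, (Rmult_le_reg_r (INR r * Q ^ 2)); [nra|].
  replace (1 / INR r * (INR r * Q ^ 2)) with (Q ^ 2) by (field; lra).
  replace ((L ^ 2 * INR r + (2 * L + 1) * b) / Q ^ 2 * (INR r * Q ^ 2))
    with ((L ^ 2 * INR r + (2 * L + 1) * b) * INR r) by (field; lra).
  rewrite HQdm. nra.
Qed.

Lemma P_ge_sinc2 r m l x z : (1 <= r)%nat -> INR r <= Qn m l ->
  -1/2 < x <= 1/2 -> x <> 0 -> Rabs (INR r * (x + IZR z)) < Qn m l / 2 ->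
  P r m l (INR r * (x + IZR z)) >= / INR r * sinc2 x (IZR z) - 3 / Qn m l.
Proof.
  intros Hr HrQ Hx Hx0 Hsmall.
  generalize (Qn_pos m l) (Rabs_add_IZR_pos x z Hx Hx0) PI_RGT_0; intros HQ Hxz HPI.
  assert (Hr0 : 0 < INR r) by (apply (lt_INR 0); lia).
  assert (Hal0 : 0 < Rabs (INR r * (x + IZR z)))
    by (rewrite Rabs_mult, Rabs_right by lra; nra).
  unfold P. destruct excluded_middle_informative as [Hmult|_].
  { apply multQ_small in Hmult; [|lra]. rewrite Hmult, Rabs_R0 in Hal0. lra. }
  assert (Hb := betan_lt r m l Hr). generalize (pos_INR (betan r m l)); intro Hb0.
  eapply Rge_trans.
  { apply fejer_mixture_ge; [lra | lra | exact HrQ | | exact Hal0 | exact Hsmall].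
    rewrite Qn_div_mod at 1. reflexivity. }
  apply Rplus_ge_compat_r. right.
  assert (Hxz0 : x + IZR z <> 0) by (intros Hz; rewrite Hz, Rabs_R0 in Hxz; lra).
  replace (PI * (INR r * (x + IZR z)) / INR r) with (PI * x + IZR z * PI) by (field; lra).
  rewrite sin_sqr_add_IZR_PI. unfold sinc2. field. lra.
Qed.

Lemma csum_ge_center g M : (forall y, 0 <= g y) -> csum g M >= g 0.
Proof.
  intros Hg. induction M as [|M IHM].
  - rewrite csum_O. lra.
  - rewrite csum_S. generalize (Hg (INR (S M))) (Hg (- INR (S M))). lra.
Qed.

Definition window_bound (r Q B : R) : R := / r * (1 - 2 / (PI ^ 2 * B)) - (2 * B + 1) * (3 / Q).

Lemma window_bound_le_inv r Q B : 0 < r -> 0 < Q -> 1 <= B -> window_bound r Q B <= 1 / r.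
Proof.
  intros Hr HQ HB. generalize PI_RGT_0; intro HPI. unfold window_bound.
  assert (0 <= / r * (2 / (PI ^ 2 * B))).
  { apply Rmult_le_pos; [apply Rlt_le, Rinv_0_lt_compat; lra|].
    apply Rlt_le, Rdiv_lt_0_compat; [lra|]. apply Rmult_lt_0_compat; [apply pow_lt|]; lra. }
  assert (0 <= 3 / Q) by (apply Rlt_le, Rdiv_lt_0_compat; lra).
  unfold Rdiv at 1. nra.
Qed.

Lemma theorem2_rhs_le_window_bound r Q B : 0 < r -> 0 < Q -> 1 <= B ->
  1 / r * (1 - 1 / PI ^ 2 * (2 / B + 1 / B ^ 2 + 1 / (3 * B ^ 3))) - PI ^ 2 * (2 * B + 1) / Q
  <= window_bound r Q B.
Proof.
  intros Hr HQ HB. generalize PI_gt_3; intro HPI. unfold window_bound.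
  assert (H9 : 9 <= PI ^ 2) by (simpl; nra).
  assert (Hextra : 0 <= 1 / B ^ 2 + 1 / (3 * B ^ 3)).
  { apply Rplus_le_le_0_compat; unfold Rdiv; rewrite Rmult_1_l; apply Rlt_le, Rinv_0_lt_compat;
      [| apply Rmult_lt_0_compat; [lra|]]; apply pow_lt; lra. }
  assert (0 < / r) by (apply Rinv_0_lt_compat; lra).
  assert (0 < / PI ^ 2) by (apply Rinv_0_lt_compat; lra).
  replace (2 / (PI ^ 2 * B)) with (/ PI ^ 2 * (2 / B)) by (field; lra).
  assert (/ r * (1 - 1 / PI ^ 2 * (2 / B + 1 / B ^ 2 + 1 / (3 * B ^ 3)))
          <= / r * (1 - / PI ^ 2 * (2 / B))).
  { apply Rmult_le_compat_l; [lra|].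
    assert (0 <= / PI ^ 2 * (1 / B ^ 2 + 1 / (3 * B ^ 3))) by (apply Rmult_le_pos; lra).
    unfold Rdiv at 1. lra. }
  assert ((2 * B + 1) * (3 / Q) <= PI ^ 2 * (2 * B + 1) / Q).
  { replace (PI ^ 2 * (2 * B + 1) / Q) with ((2 * B + 1) * (PI ^ 2 / Q)) by (field; lra).
    apply Rmult_le_compat_l; [lra|]. unfold Rdiv. apply Rmult_le_compat_r; [|lra].
    apply Rlt_le, Rinv_0_lt_compat; lra. }
  replace (1 / r) with (/ r) by (unfold Rdiv; ring). lra.
Qed.

Lemma csum_P_center_ge r m l B : (1 <= r)%nat ->
  csum (fun y => P r m l (INR r * y)) B >= 1 / INR r.
Proof.
  intros Hr. apply Rge_trans with (P r m l (INR r * 0)).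
  - apply csum_ge_center. intros y. apply P_nonneg, Hr.
  - rewrite Rmult_0_r. apply P_zero_ge, Hr.
Qed.

Lemma csum_P_ge_window_bound r m l x B : (1 <= r)%nat -> (1 <= B)%nat ->
  INR r * (2 * INR B + 1) < Qn m l -> -1/2 < x <= 1/2 -> x <> 0 ->
  csum (fun y => P r m l (INR r * (x + y))) B >= window_bound (INR r) (Qn m l) (INR B).
Proof.
  intros Hr HB HrQ Hx Hx0. unfold window_bound.
  assert (Hr0 : 0 < INR r) by (apply (lt_INR 0); lia).
  generalize (pos_INR B); intro HB0.
  apply Rle_ge, Rle_trans with (csum (fun y => / INR r * sinc2 x y + - (3 / Qn m l)) B).
  { rewrite csum_affine.
    assert (/ INR r * (1 - 2 / (PI ^ 2 * INR B)) <= / INR r * csum (sinc2 x) B).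
    { apply Rmult_le_compat_l; [apply Rlt_le, Rinv_0_lt_compat; lra|].
      apply Rge_le, csum_sinc2_ge; assumption. }
    lra. }
  apply csum_le. intros z Hz. apply Rge_le, P_ge_sinc2; try assumption; [nra|].
  rewrite Rabs_mult, Rabs_right by lra.
  apply Rle_lt_trans with (INR r * (INR B + 1 / 2)); [|lra].
  apply Rmult_le_compat_l; [lra|].
  generalize (Rabs_triang x (IZR z)); unfold Rabs at 2; destruct Rcase_abs; lra.
Qed.

Theorem theorem2 (r m l : nat) (alpha0 : R) (B : nat)
  (hr : (2 <= r)%nat) (hm : (1 <= m)%nat) (hl : (1 <= l)%nat)
  (hrm : (r < Nat.pow 2 m)%nat)
  (ha1 : - INR r / 2 < alpha0) (ha2 : alpha0 <= INR r / 2)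
  (hB1 : (1 <= B)%nat) (hB2 : INR B < (Qn m l / INR r - 1) / 2) :
  sum_f_R0 (fun k => P r m l (alpha0 + INR r * (INR k - INR B))) (2 * B)
  >= 1 / INR r * (1 - 1 / PI ^ 2 * (2 / INR B + 1 / INR B ^ 2 + 1 / (3 * INR B ^ 3)))
     - PI ^ 2 * (2 * INR B + 1) / Qn m l.
Proof.
  assert (Hr : 2 <= INR r) by (apply (le_INR 2); exact hr).
  assert (HB : 1 <= INR B) by (apply (le_INR 1); exact hB1).
  assert (HrQ : INR r * (2 * INR B + 1) < Qn m l).
  { apply (Rmult_lt_reg_r (/ INR r)); [apply Rinv_0_lt_compat; lra|].
    replace (INR r * (2 * INR B + 1) * / INR r) with (2 * INR B + 1) by (field; lra). lra. }
  apply Rle_ge, Rle_trans with (window_bound (INR r) (Qn m l) (INR B)).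
  { apply theorem2_rhs_le_window_bound; [lra | apply Qn_pos | lra]. }
  set (x := alpha0 / INR r).
  change (sum_f_R0 _ (2 * B)) with (csum (fun y => P r m l (alpha0 + INR r * y)) B).
  replace (csum (fun y => P r m l (alpha0 + INR r * y)) B)
    with (csum (fun y => P r m l (INR r * (x + y))) B)
    by (unfold csum; apply sum_eq; intros; unfold x; f_equal; field; lra).
  destruct (Req_dec x 0) as [Hx0|Hx0].
  - replace (csum _ B) with (csum (fun y => P r m l (INR r * y)) B)
      by (unfold csum; apply sum_eq; intros; rewrite Hx0, Rplus_0_l; reflexivity).
    apply Rle_trans with (1 / INR r); [apply window_bound_le_inv; [lra | apply Qn_pos | lra]|].
    apply Rge_le, csum_P_center_ge. lia.
  - apply Rge_le, csum_P_ge_window_bound; try lia; try assumption.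
    unfold x. split; [apply (Rmult_lt_reg_r (INR r)) | apply (Rmult_le_reg_r (INR r))];
      try lra; field_simplify; lra.
Qed.
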